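(* Let $z_1,\dots,z_n$ be distinct integers, let $t$ be an integer, and let $w$ be a positive integer with $w<n$. Let $M_w\in\mathbb{Z}^{(w+1)\times(n+1)}$ have rows indexed by $r=0,1,\dots,w$ and columns by $j=1,\dots,n+1$, with entries $(M_w)_{r,j}=z_j^r$ for $1\le j\le n$, and last column given by $(M_w)_{r,n+1}=0$ for $r\le w-2$, $(M_w)_{w-1,n+1}=1$, $(M_w)_{w,n+1}=t$. Then $M_w$ has a null vector (a nonzero rational vector $v$ with $M_wv=0$) of Hamming weight $w+1$ if and only if $z_{i_1}+z_{i_2}+\cdots+z_{i_w}=t$ for some indices $i_1<i_2<\cdots<i_w$.
   Context: The Hamming weight of a vector is its number of nonzero coordinates. *)

From HB Require Import structures.
From mathcomp Require Import all_boot all_order all_algebra.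
Set Implicit Arguments. Unset Strict Implicit. Unset Printing Implicit Defensive.
Import Order.TTheory GRing.Theory Num.Theory.
Local Open Scope ring_scope.

Definition hamming_weight (R : nzRingType) (m : nat) (v : 'cV[R]_m) : nat :=
  #|[set i : 'I_m | v i 0 != 0]|.

(* The matrix M_w (over rat), rows r = 0..w, columns j = 1..n (0-indexed here
   as 0..n-1, via lshift) followed by the extra last column (rshift). *)
Definition Mw (n w : nat) (z : 'I_n -> int) (t : int) : 'M[rat]_(w.+1, n + 1) :=
  row_mx (\matrix_(r < w.+1, j < n) ((z j)%:~R ^+ r))
         (\col_(r < w.+1) (if (r : nat) == w.-1 then 1
                            else if (r : nat) == w then t%:~R else 0)).

From HB Require Import structures.
From mathcomp Require Import all_boot all_order all_algebra.
From mathcomp Require Import ring.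
Set Implicit Arguments. Unset Strict Implicit. Unset Printing Implicit Defensive.
Import Order.TTheory GRing.Theory Num.Theory.
Local Open Scope ring_scope.

(* Write a vector as v = (x, y) with x in Q^n and y in Q. Pairing M_w v with the
   coefficient row of a polynomial p of degree at most w shows that M_w v = 0
   iff  sum_j x_j p(z_j) + y (p_{w-1} + t p_w) = 0  for all such p.  Take p to
   be the nodal polynomial prod_{i in T} (X - z_i), whose subleading coefficient
   is -sum_{i in T} z_i, for T containing the support S of x.  If y = 0 then
   |S| = w + 1, and T = S minus one point j gives x_j p(z_j) = 0, which is
   absurd; if y <> 0 then |S| = w and T = S gives sum_{i in S} z_i = t.
   Conversely, for |S| = w the Lagrange weights 1 / prod_{i in S, i <> j}
   (z_j - z_i) pick out the coefficient of degree w - 1 of polynomials of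
   degree < w, which yields a null vector of weight w + 1 when the z_i,
   i in S, sum to t. *)

Section NodalPolynomial.
Variables (F : fieldType) (I : finType) (Z : I -> F).

Definition nodal (S : {set I}) : {poly F} := \prod_(i in S) ('X - (Z i)%:P).

Lemma nodalE (S : {set I}) : nodal S = \prod_(a <- [seq Z i | i <- enum S]) ('X - a%:P).
Proof. by rewrite big_map big_enum. Qed.

Lemma size_nodal (S : {set I}) : size (nodal S) = #|S|.+1.
Proof. by rewrite nodalE size_prod_XsubC size_map cardE. Qed.

Lemma coef_nodal_card (S : {set I}) : (nodal S)`_#|S| = 1.
Proof.
have /monicP := monic_prod_XsubC (index_enum I) (mem S) Z.
by rewrite /lead_coef -/(nodal S) size_nodal.
Qed.

Lemma coef_nodal_pred_card (S : {set I}) :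
  (0 < #|S|)%N -> (nodal S)`_#|S|.-1 = - \sum_(i in S) Z i.
Proof.
move=> S_gt0; rewrite nodalE cardE -(size_map Z) coefPn_prod_XsubC.
  by rewrite big_map big_enum.
by rewrite size_map -cardE -lt0n.
Qed.

Lemma horner_nodal_mem (S : {set I}) j : j \in S -> (nodal S).[Z j] = 0.
Proof. by move=> jS; rewrite horner_prod (bigD1 j) //= hornerXsubC subrr mul0r. Qed.

Hypothesis Z_inj : injective Z.

Lemma horner_nodal_notin (S : {set I}) j : j \notin S -> (nodal S).[Z j] != 0.
Proof.
move=> jNS; rewrite horner_prod; apply/prodf_neq0 => i iS.
by rewrite hornerXsubC subr_eq0; apply: contraNneq jNS => /Z_inj ->.
Qed.

Lemma horner_nodal_setD1 (S : {set I}) j : (nodal (S :\ j)).[Z j] != 0.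
Proof. by rewrite horner_nodal_notin // setD11. Qed.

Lemma interp_coef_pred_card (S : {set I}) (p : {poly F}) : (size p <= #|S|)%N ->
  p`_#|S|.-1 = \sum_(j in S) p.[Z j] / (nodal (S :\ j)).[Z j].
Proof.
move=> size_p.
pose P := \sum_(j in S) (p.[Z j] / (nodal (S :\ j)).[Z j]) *: nodal (S :\ j).
have size_P : (size P <= #|S|)%N.
  apply: (leq_trans (size_sum _ _ _)); apply/bigmax_leqP => j jS.
  by apply: (leq_trans (size_scale_leq _ _)); rewrite size_nodal (cardsD1 j S) jS.
have P_interp : {in S, forall j, P.[Z j] = p.[Z j]}.
  move=> k kS; rewrite horner_sum (bigD1 k) //= big1 => [|j /andP[jS jk]].
    by rewrite hornerZ addr0 divfK // horner_nodal_setD1.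
  by rewrite hornerZ (@horner_nodal_mem _ k) ?mulr0 // in_setD1 eq_sym jk.
have P_eq : P = p.
  apply/eqP; rewrite -subr_eq0; apply/eqP.
  apply: (@roots_geq_poly_eq0 _ _ [seq Z i | i <- enum S]).
  - apply/allP => x /mapP[k]; rewrite mem_enum => kS ->.
    by rewrite /root hornerD hornerN P_interp // subrr.
  - by rewrite map_inj_uniq ?enum_uniq.
  - rewrite size_map -cardE (leq_trans (size_polyD _ _)) //.
    by rewrite size_polyN geq_max size_P.
rewrite -{1}P_eq coef_sum; apply: eq_bigr => j jS.
have -> : #|S|.-1 = #|S :\ j| by rewrite (cardsD1 j S) jS.
by rewrite coefZ coef_nodal_card mulr1.
Qed.

Lemma sum_horner_nodal (c : I -> F) (T : {set I}) :
  \sum_i c i * (nodal T).[Z i]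
    = \sum_(i in [set i | c i != 0] :\: T) c i * (nodal T).[Z i].
Proof.
rewrite [RHS]big_mkcond; apply: eq_bigr => i _; rewrite !inE.
have [iT|iNT] := boolP (i \in T); first by rewrite horner_nodal_mem ?mulr0.
by case: eqP => [->|]; rewrite ?mul0r.
Qed.

Definition interp_weight (S : {set I}) (j : I) : F :=
  if j \in S then ((nodal (S :\ j)).[Z j])^-1 else 0.

Lemma interp_weight_eq0 (S : {set I}) j : (interp_weight S j == 0) = (j \notin S).
Proof.
rewrite /interp_weight; case: ifP => jS; rewrite ?eqxx //.
by rewrite invr_eq0 (negPf (horner_nodal_setD1 _ _)).
Qed.

Lemma sum_interp_weight (S : {set I}) (p : {poly F}) :
  (0 < #|S|)%N -> (size p <= #|S|.+1)%N ->
  \sum_j interp_weight S j * p.[Z j] = p`_#|S|.-1 + p`_#|S| * \sum_(i in S) Z i.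
Proof.
move=> S_gt0 size_p; pose q := p - p`_#|S| *: nodal S.
have size_q : (size q <= #|S|)%N.
  apply/leq_sizeP => k; rewrite leq_eqVlt => /orP[/eqP <-|ltSk].
    by rewrite coefB coefZ coef_nodal_card mulr1 subrr.
  rewrite coefB coefZ (nth_default _ (leq_trans size_p ltSk)).
  by rewrite [_`_k]nth_default ?size_nodal // mulr0 subrr.
have -> : \sum_j interp_weight S j * p.[Z j]
    = \sum_(j in S) q.[Z j] / (nodal (S :\ j)).[Z j].
  rewrite [RHS]big_mkcond; apply: eq_bigr => j _; rewrite /interp_weight.
  case: ifP => jS; last by rewrite mul0r.
  by rewrite hornerD hornerN hornerZ (@horner_nodal_mem S) // mulr0 subr0 mulrC.
rewrite -interp_coef_pred_card // coefB coefZ coef_nodal_pred_card //.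
by rewrite mulrN opprK.
Qed.

End NodalPolynomial.

Lemma hamming_weight_col_mx (R : nzRingType) m1 m2 (x : 'cV[R]_m1) (y : 'cV[R]_m2) :
  hamming_weight (col_mx x y) = (hamming_weight x + hamming_weight y)%N.
Proof.
rewrite /hamming_weight -!sum1_card big_mkcond big_split_ord /=.
by congr (_ + _)%N; rewrite [RHS]big_mkcond; apply: eq_bigr => i _;
  rewrite !inE ?col_mxEu ?col_mxEd.
Qed.

Lemma hamming_weight_scalar (R : nzRingType) (y : 'cV[R]_1) :
  hamming_weight y = (y 0 0 != 0).
Proof. by rewrite /hamming_weight -sum1_card big_mkcond big_ord1 inE; case: (_ != 0). Qed.

Lemma hamming_weight_eq0 (R : nzRingType) m (v : 'cV[R]_m) :
  (hamming_weight v == 0)%N = (v == 0).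
Proof.
rewrite cards_eq0; apply/eqP/eqP => [v0|->]; last first.
  by apply/setP => i; rewrite !inE mxE eqxx.
apply/matrixP => i j; rewrite ord1 mxE.
by move/setP: v0 => /(_ i); rewrite !inE => /negbFE/eqP.
Qed.

Section NullVectorsOfMw.
Variables (n w : nat) (z : 'I_n -> int) (t : int).
Hypothesis w_gt0 : (0 < w)%N.

Let Z (j : 'I_n) : rat := (z j)%:~R.

(* The row of coefficients of p, times Mw, times col_mx x y. *)
Definition Mw_form (x : 'cV[rat]_n) (y : rat) (p : {poly rat}) : rat :=
  \sum_j x j 0 * p.[Z j] + y * (p`_w.-1 + t%:~R * p`_w).

Lemma Mw_mul_col_mx_entry (x : 'cV[rat]_n) (y : 'cV[rat]_1) (r : 'I_w.+1) :
  (Mw w z t *m col_mx x y) r 0 = Mw_form x (y 0 0) 'X^r.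
Proof.
rewrite mul_row_col !mxE big_ord1 !mxE /Mw_form; congr (_ + _).
  by apply: eq_bigr => j _; rewrite !mxE hornerXn mulrC.
rewrite !coefXn mulrC; congr (_ * _).
have pred_w_neq : w.-1 != w by rewrite neq_ltn ltn_predL w_gt0.
rewrite ![(_ == r :> nat)]eq_sym; have [->|_] := eqVneq (r : nat) w.-1.
  by rewrite (negPf pred_w_neq) mulr0 addr0.
by case: eqP; rewrite /= ?mulr1 ?mulr0 add0r.
Qed.

Lemma Mw_form_sum (x : 'cV[rat]_n) (y : rat) (a : 'I_w.+1 -> rat) :
  Mw_form x y (\sum_r a r *: 'X^r) = \sum_r a r * Mw_form x y 'X^r.
Proof.
rewrite /Mw_form; under [RHS]eq_bigr do rewrite mulrDr.
rewrite big_split /=; congr (_ + _).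
  under [RHS]eq_bigr do rewrite mulr_sumr.
  rewrite exchange_big /=; apply: eq_bigr => j _.
  by rewrite horner_sum mulr_sumr; apply: eq_bigr => r _; rewrite hornerZ mulrCA.
rewrite !coef_sum mulr_sumr -big_split mulr_sumr; apply: eq_bigr => r _.
by rewrite !coefZ /=; ring.
Qed.

Lemma Mw_form_wide (x : 'cV[rat]_n) (y : rat) (p : {poly rat}) :
  (size p <= w.+1)%N -> Mw_form x y p = \sum_(r < w.+1) p`_r * Mw_form x y 'X^r.
Proof.
move=> size_p; have pE : p = \sum_(r < w.+1) p`_r *: 'X^r.
  rewrite -poly_def; apply/polyP => k; rewrite coef_poly.
  by case: ltnP => // le_w_k; rewrite nth_default // (leq_trans size_p).
by rewrite {1}pE Mw_form_sum.
Qed.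

Lemma Mw_mul_col_mx_eq0 (x : 'cV[rat]_n) (y : 'cV[rat]_1) :
  Mw w z t *m col_mx x y = 0 <->
  (forall p : {poly rat}, (size p <= w.+1)%N -> Mw_form x (y 0 0) p = 0).
Proof.
split=> [Mv0 p size_p | form0].
  rewrite Mw_form_wide //; apply: big1 => r _.
  by rewrite -Mw_mul_col_mx_entry Mv0 mxE mulr0.
apply/matrixP => r c; rewrite ord1 Mw_mul_col_mx_entry mxE form0 //.
by rewrite size_polyXn.
Qed.

Hypothesis z_inj : injective z.

Let Z_inj : injective Z.
Proof. by move=> i j /intr_inj /z_inj. Qed.

Let sum_Z (S : {set 'I_n}) : \sum_(i in S) Z i = (\sum_(i in S) z i)%:~R.
Proof. by rewrite mulrz_sumr. Qed.

Lemma subset_sum_of_Mw_null (x : 'cV[rat]_n) (y : 'cV[rat]_1) :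
  Mw w z t *m col_mx x y = 0 -> hamming_weight (col_mx x y) = w.+1 ->
  exists S : {set 'I_n}, #|S| = w /\ \sum_(i in S) z i = t.
Proof.
rewrite Mw_mul_col_mx_eq0 hamming_weight_col_mx hamming_weight_scalar => form0.
set S := [set j | x j 0 != 0]; rewrite [hamming_weight x]/hamming_weight -/S.
have form_nodal T : Mw_form x (y 0 0) (nodal Z T) =
    \sum_(j in S :\: T) x j 0 * (nodal Z T).[Z j]
    + y 0 0 * ((nodal Z T)`_w.-1 + t%:~R * (nodal Z T)`_w).
  by rewrite /Mw_form sum_horner_nodal.
have [y0 | y_neq0] := eqVneq (y 0 0) 0; last first.
  rewrite addn1 => -[card_S]; exists S; split=> //.
  have := form0 (nodal Z S); rewrite form_nodal setDv big_set0 add0r size_nodal.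
  rewrite -card_S coef_nodal_card coef_nodal_pred_card ?card_S // => /(_ (ltnSn _)) /eqP.
  rewrite mulf_eq0 (negPf y_neq0) mulr1 addrC subr_eq0 sum_Z eq_sym => /eqP.
  exact: intr_inj.
rewrite addn0 => card_S.
have [j0 j0S] : exists j0, j0 \in S by apply/set0Pn; rewrite -card_gt0 card_S.
have x_j0 : x j0 0 != 0 by move: j0S; rewrite inE.
have S_minus : S :\: (S :\ j0) = [set j0].
  by apply/setP => j; rewrite !inE; case: eqP => [->|_] /=; rewrite ?x_j0 ?andNb.
have card_Sj0 : #|S :\ j0| = w by move: card_S; rewrite (cardsD1 j0 S) j0S => -[].
have := form0 (nodal Z (S :\ j0)).
rewrite form_nodal S_minus big_set1 y0 mul0r addr0 size_nodal card_Sj0.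
move=> /(_ (ltnSn _)) /eqP.
by rewrite mulf_eq0 (negPf x_j0) (negPf (horner_nodal_setD1 Z_inj _ _)).
Qed.

Definition subset_null_vector (S : {set 'I_n}) : 'cV[rat]_(n + 1) :=
  col_mx (\col_j interp_weight Z S j) (const_mx (-1)).

Lemma Mw_mul_subset_null_vector (S : {set 'I_n}) :
  #|S| = w -> \sum_(i in S) z i = t -> Mw w z t *m subset_null_vector S = 0.
Proof.
move=> card_S sum_S; apply/Mw_mul_col_mx_eq0 => p size_p.
rewrite /Mw_form mxE; under eq_bigr do rewrite mxE.
by rewrite sum_interp_weight ?card_S // sum_Z sum_S; ring.
Qed.

Lemma hamming_weight_subset_null_vector (S : {set 'I_n}) :
  hamming_weight (subset_null_vector S) = #|S|.+1.
Proof.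
rewrite hamming_weight_col_mx hamming_weight_scalar mxE oppr_eq0 oner_eq0 addn1.
congr _.+1; apply: eq_card => j; rewrite !inE mxE.
by rewrite interp_weight_eq0 // negbK.
Qed.

End NullVectorsOfMw.

Theorem lemma2p6 (n : nat) (z : 'I_n -> int) (t : int) (w : nat)
  (hz : injective z) (hw0 : (0 < w)%N) (hwn : (w < n)%N) :
  (exists v : 'cV[rat]_(n + 1),
      [/\ v != 0, @Mw n w z t *m v = 0 & hamming_weight v = w.+1])
  <-> (exists S : {set 'I_n}, #|S| = w /\ \sum_(i in S) z i = t).
Proof.
split=> [[v [_ Mv0 weight_v]] | [S [card_S sum_S]]].
  rewrite -(vsubmxK v) in Mv0 weight_v.
  exact: subset_sum_of_Mw_null Mv0 weight_v.
exists (subset_null_vector z S); split.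
- by rewrite -hamming_weight_eq0 hamming_weight_subset_null_vector.
- exact: Mw_mul_subset_null_vector.
- by rewrite hamming_weight_subset_null_vector //; apply: congr1 card_S.
Qed.
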